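(* Let $D_1, D_2, D_3$ be pairwise disjoint finite sets with $|D_1|=|D_2|=|D_3|=n$, and let $S=\{p_1,\dots,p_d\}$ be a set of $d \ge n$ distinct points of $D_1\times D_2\times D_3$. Let $m$ be an integer with $3 \le m \le 3n$. Construct the table $\mathcal{T}$ described in the context. Then there exists $S' \subseteq S$ with $|S'|=n$ such that no two points of $S'$ share a coordinate on any dimension (i.e., 3-dimensional matching on $S$ answers ``yes'') if and only if there is a $3$-diverse generalization of $\mathcal{T}$ with exactly $3n(d-1)$ stars.
   Context: Generalization and diversity: a microdata table is a multiset of tuples over categorical quasi-identifier (QI) attributes $A_1,\dots,A_d$ and a sensitive attribute (SA) $B$. A set $S$ of tuples is $l$-eligible if at most $|S|/l$ of its tuples share any identical SA value. A partition of the table into QI-groups defines a generalization: in each group, an attribute $A_i$ keeps its value if all tuples of the group agree on it, otherwise every tuple's $A_i$ value in that group is replaced by a star; SA values are kept. The generalization is $l$-diverse if every QI-group is $l$-eligible. Construction of $\mathcal{T}$: enumerate $D_1=\{v_1,\dots,v_n\}$, $D_2=\{v_{n+1},\dots,v_{2n}\}$, $D_3=\{v_{2n+1},\dots,v_{3n}\}$. For $j \in [1,3n]$ define an integer $u_j$: $u_j=j$ if $j \le m-2$; for $j \ge m-1$: if $m-1>2n$, $u_j=m-1$ for $j\in[m-1,3n-1]$ and $u_{3n}=m$; if $2n \ge m-1 > n$, $u_j=m-1$ for $j \in [m-1,2n]$ and $u_j=m$ for $j\in[2n+1,3n]$; if $n \ge m-1$, $u_j=m-2$ for $j\in[m-1,n]$,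 $u_j=m-1$ for $j\in[n+1,2n]$, $u_j=m$ for $j \in [2n+1,3n]$. The table $\mathcal{T}$ has QI attributes $A_1,\dots,A_d$ (with $A_i$ corresponding to $p_i$), SA $B$, and $3n$ rows $t_1,\dots,t_{3n}$, where $t_j[B]=u_j$ and, for each $i\in[1,d]$, $t_j[A_i]=0$ if $v_j$ is a coordinate of $p_i$, and $t_j[A_i]=u_j$ otherwise. *)

From mathcomp Require Import all_boot.
Set Implicit Arguments. Unset Strict Implicit. Unset Printing Implicit Defensive.

(* Rows t_1..t_{3n} are indexed by j : 'I_(3*n), representing row number j.+1.
   QI attributes A_1..A_d are indexed by i : 'I_d. Attribute values are nats. *)

(* The sensitive value u_j (1-based j), as in the paper. *)
Definition u (n m j : nat) : nat :=
  if j <= m - 2 then j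
  else if 2 * n < m - 1 then (if j <= 3 * n - 1 then m - 1 else m)
  else if n < m - 1 then (if j <= 2 * n then m - 1 else m)
  else if j <= n then m - 2
  else if j <= 2 * n then m - 1
  else m.

Definition tA {T : eqType} {d : nat} (n m : nat) (v : nat -> T) (p : 'I_d -> T * T * T)
  (j : 'I_(3 * n)) (i : 'I_d) : nat :=
  let jj := (nat_of_ord j).+1 in
  if [|| v jj == (p i).1.1, v jj == (p i).1.2 | v jj == (p i).2]
  then 0 else u n m jj.

Definition tB (n m : nat) (j : 'I_(3 * n)) : nat := u n m (nat_of_ord j).+1.

Definition l_eligible (N : nat) (l : nat) (B : 'I_N -> nat) (G : {set 'I_N}) : Prop :=
  forall x : nat, l * #|[set j in G | B j == x]| <= #|G|.

Definition stars (N d : nat) (A : 'I_N -> 'I_d -> nat) (P : {set {set 'I_N}}) : nat :=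
  \sum_(G in P) \sum_(i < d)
     (if [forall j in G, forall k in G, A j i == A k i] then 0 else #|G|).

(* An l-diverse generalization, given by a partition of the rows into QI-groups. *)
Definition l_diverse_partition (N : nat) (l : nat) (B : 'I_N -> nat)
  (P : {set {set 'I_N}}) : Prop :=
  partition P [set: 'I_N] /\ (forall G, G \in P -> l_eligible l B G).

Definition has_3DM {T : eqType} {d : nat} (n : nat) (p : 'I_d -> T * T * T) : Prop :=
  exists I : {set 'I_d}, #|I| = n /\
    forall i k, i \in I -> k \in I -> i != k ->
      [/\ (p i).1.1 != (p k).1.1, (p i).1.2 != (p k).1.2 & (p i).2 != (p k).2].

Arguments tA {T d} n m v p j i.
Arguments tB : clear implicits.

From mathcomp Require Import all_boot zify.
Set Implicit Arguments. Unset Strict Implicit. Unset Printing Implicit Defensive.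

(* Let C_i be the set of rows whose value is a coordinate of p_i, so that row j
   holds 0 in A_i if j is in C_i and its positive SA value otherwise.  A
   nonempty 3-eligible group has at least three rows and is not constant on B,
   so A_i can stay unstarred on it only if the group lies inside C_i, which has
   three rows: the group then equals C_i.  Hence each group of a 3-diverse
   generalization keeps at most one attribute, the generalization has at least
   3n(d-1) stars, and equality means that every group is some C_i.  Since u
   separates the three blocks of rows, each C_i is 3-eligible, so the optimum is
   reached iff n of the triples C_i partition the 3n rows, i.e. iff n of the
   points pairwise share no coordinate. *)

Section Eligibility.

Variables (N : nat) (B : 'I_N -> nat).
Implicit Types (G : {set 'I_N}) (l : nat).

Lemma eligible_card_ge l G : G != set0 -> l_eligible l B G -> l <= #|G|.
Proof.
case/set0Pn => j jG /(_ (B j)); apply: leq_trans; rewrite leq_pmulr //.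
by apply/card_gt0P; exists j; rewrite inE jG eqxx.
Qed.

Lemma eligible_nonconstant l G j0 : 1 < l -> j0 \in G -> l_eligible l B G ->
  ~ {in G, forall j, B j = B j0}.
Proof.
move=> l_gt1 j0G /(_ (B j0)) elig constB.
have sameG : [set j in G | B j == B j0] = G.
  by apply/setP => j; rewrite inE andb_idr // => /constB ->.
have : 0 < #|G| by apply/card_gt0P; exists j0.
by move: elig; rewrite sameG; nia.
Qed.

Lemma eligible_of_injective l G : {in G &, injective B} -> l <= #|G| ->
  l_eligible l B G.
Proof.
move=> injB lG x; apply: leq_trans lG.
have : #|[set j in G | B j == x]| <= 1.
  apply/card_le1_eqP => j k; rewrite !inE => /andP[jG /eqP Bj] /andP[kG /eqP Bk].
  by apply: injB; rewrite ?Bj ?Bk.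
by move=> S_le1; rewrite -[leqRHS]muln1 leq_mul.
Qed.

End Eligibility.

Section PreimageInCodomain.

Variables (aT rT : finType) (f : aT -> rT).
Implicit Types X Y : {set rT}.

Lemma imset_preimset_codom X : X \subset codom f -> f @: (f @^-1: X) = X.
Proof.
move=> Xf; apply/setP => x; apply/imsetP/idP => [[y] | xX].
  by rewrite inE => fyX ->.
have /codomP[y fyx] := subsetP Xf x xX.
by exists y; rewrite ?inE -?fyx.
Qed.

Lemma card_preimset_codom X : injective f -> X \subset codom f ->
  #|f @^-1: X| = #|X|.
Proof.
by move=> f_inj Xf; rewrite -{2}(imset_preimset_codom Xf) (card_imset _ f_inj).
Qed.

Lemma preimset_inj_codom X Y : X \subset codom f -> Y \subset codom f ->
  f @^-1: X = f @^-1: Y -> X = Y.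
Proof.
by move=> Xf Yf eXY; rewrite -(imset_preimset_codom Xf) eXY imset_preimset_codom.
Qed.

Lemma preimset_eq0_codom X : X \subset codom f -> (f @^-1: X == set0) = (X == set0).
Proof.
move=> Xf; apply/eqP/eqP => [X0 | ->]; last exact: preimset0.
by rewrite -(imset_preimset_codom Xf) X0 imset0.
Qed.

End PreimageInCodomain.

Section ExactCover.

Variables (U : finType) (d n k : nat) (C : 'I_d -> {set U}).
Hypotheses (C_inj : injective C) (card_C : forall i, #|C i| = k)
  (k_gt0 : 0 < k) (card_U : #|U| = k * n).

Lemma exact_cover_iff :
  (exists P : {set {set U}}, partition P [set: U] /\ {in P, forall G, exists i, G = C i})
  <-> (exists I : {set 'I_d}, #|I| = n /\
        forall i j, i \in I -> j \in I -> i != j -> [disjoint C i & C j]).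
Proof.
split=> [[P [partP PC]] | [I [card_I disjC]]].
  pose I := [set i | C i \in P].
  have P_im : P = C @: I.
    apply/setP => G; apply/idP/imsetP => [GP | [i] /[!inE] iP -> //].
    by have [i eGi] := PC G GP; exists i; rewrite ?inE -eGi.
  exists I; split.
    have card_P : #|P| = #|I| by rewrite P_im (card_imset _ C_inj).
    have card_G : {in P, forall G : {set U}, #|G| = k} by move=> G /PC[i ->].
    move/eqP: (card_uniform_partition card_G partP).
    by rewrite cardsT card_U card_P mulnC eqn_pmul2r // eq_sym => /eqP.
  move=> i j; rewrite !inE => iP jP ij.
  case/and3P: partP => _ /trivIsetP trivP _; apply: trivP => //.
  by rewrite (inj_eq C_inj).
pose P := C @: I.
have [partP injC] : partition P (cover P) /\ {in I &, injective C}.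
  apply: indexed_partition => [i j iI jI ji | i _].
    by apply: disjC; rewrite // eq_sym.
  by rewrite -card_gt0 card_C.
exists P; split=> [|G /imsetP[i _ ->]]; last by exists i.
suff coverP : cover P = [set: U] by rewrite -coverP.
apply/eqP; rewrite eqEcard subsetT cardsT card_U.
have card_G : {in P, forall G : {set U}, #|G| = k} by move=> G /imsetP[i _ ->].
by rewrite (card_uniform_partition card_G partP) card_in_imset // card_I mulnC leqnn.
Qed.

End ExactCover.

Section MinimumStars.

Variables (N d : nat) (B : 'I_N -> nat) (C : 'I_d -> {set 'I_N})
  (A : 'I_N -> 'I_d -> nat).
Hypotheses (B_gt0 : forall j, 0 < B j)
  (A_def : forall j i, A j i = if j \in C i then 0 else B j)
  (C_inj : injective C) (card_C_le3 : forall i, #|C i| <= 3)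
  (C_eligible : forall i, l_eligible 3 B (C i)) (d_gt0 : 0 < d).
Implicit Types (G : {set 'I_N}) (P : {set {set 'I_N}}).

Definition attr_const G i := [forall j in G, forall k in G, A j i == A k i].

Definition excess_stars G := if [exists i, attr_const G i] then 0 else #|G|.

Lemma attr_constP G i : reflect {in G &, forall j k, A j i = A k i} (attr_const G i).
Proof.
apply: (iffP forall_inP) => [constA j k jG kG | constA j jG].
  by apply/eqP; move/forall_inP: (constA j jG) => /(_ k kG).
by apply/forall_inP => k kG; rewrite (constA j k).
Qed.

Lemma A_eq0 j i : (A j i == 0) = (j \in C i).
Proof. by rewrite A_def; case: (j \in C i); rewrite ?eqxx ?(gtn_eqF (B_gt0 j)). Qed.

Lemma attr_const_subset l G i : 1 < l -> G != set0 -> l_eligible l B G ->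
  attr_const G i -> G \subset C i.
Proof.
move=> l_gt1 /set0Pn[j0 j0G] elig /attr_constP constA.
case: (boolP (j0 \in C i)) => [j0C | j0C].
  by apply/subsetP => j jG; rewrite -A_eq0 (constA j j0) // A_eq0.
case: (eligible_nonconstant l_gt1 j0G elig) => j jG.
have := constA j j0 jG j0G; rewrite !A_def (negbTE j0C).
by case: ifP => // _ Bj; have := B_gt0 j0; rewrite -Bj.
Qed.

Lemma attr_const_eq G i : G != set0 -> l_eligible 3 B G -> attr_const G i ->
  G = C i.
Proof.
move=> G0 elig constA; apply/eqP; rewrite eqEcard (@attr_const_subset 3) //=.
exact: leq_trans (card_C_le3 i) (eligible_card_ge G0 elig).
Qed.

Lemma attr_const_C i : attr_const (C i) i.
Proof. by apply/attr_constP => j k jC kC; rewrite !A_def jC kC. Qed.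

Lemma group_stars G : G != set0 -> l_eligible 3 B G ->
  \sum_(i < d) (if attr_const G i then 0 else #|G|) = (d - 1) * #|G| + excess_stars G.
Proof.
move=> G0 elig; rewrite /excess_stars.
case: existsP => [[i0 const_i0] | no_const].
  rewrite (bigD1 i0) //= const_i0 add0n addn0 (eq_bigr (fun _ => #|G|)).
    by rewrite sum_nat_const cardC1 card_ord subn1.
  move=> i i_neq; case: ifP => // const_i; case/eqP: i_neq.
  apply: C_inj.
  by rewrite -(attr_const_eq G0 elig const_i) -(attr_const_eq G0 elig const_i0).
rewrite (eq_bigr (fun _ => #|G|)) => [|i _]; last first.
  by case: ifP => // const_i; case: no_const; exists i.
by rewrite sum_nat_const card_ord addnC -mulSn subn1 prednK.
Qed.

Lemma stars_diverse P : l_diverse_partition 3 B P ->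
  stars A P = N * (d - 1) + \sum_(G in P) excess_stars G.
Proof.
case=> partP elig; rewrite /stars.
rewrite (eq_bigr (fun G => (d - 1) * #|G| + excess_stars G)) => [|G GP]; last first.
  by rewrite -group_stars ?(partition_neq0 partP) //; apply: elig.
by rewrite big_split -big_distrr /= -(card_partition partP) cardsT card_ord mulnC.
Qed.

Lemma diverse_min_stars P : l_diverse_partition 3 B P ->
  stars A P = N * (d - 1) <-> {in P, forall G, exists i, G = C i}.
Proof.
move=> divP; have [partP elig] := divP.
rewrite stars_diverse // -[RHS]addn0; split=> [/eqP | PC].
  rewrite eqn_add2l sum_nat_eq0 => /forall_inP excess0 G GP.
  move: (excess0 G GP); rewrite /excess_stars.
  have G0 := partition_neq0 partP GP.
  case: existsP => [[i const_i] _ | _]; last first.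
    by move/eqP/cards0_eq => G_eq0; rewrite G_eq0 eqxx in G0.
  by exists i; apply: attr_const_eq G0 (elig G GP) const_i.
congr (_ + _); apply: big1 => G /PC[i ->]; rewrite /excess_stars.
by case: existsP => // -[]; exists i; apply: attr_const_C.
Qed.

Lemma min_stars_iff_cover :
  (exists P, l_diverse_partition 3 B P /\ stars A P = N * (d - 1))
  <-> (exists P, partition P [set: 'I_N] /\ {in P, forall G, exists i, G = C i}).
Proof.
split=> [[P [divP /(diverse_min_stars divP) PC]] | [P [partP PC]]].
  by exists P; split=> //; case: divP.
have divP : l_diverse_partition 3 B P by split=> // G /PC[i ->].
by exists P; split=> //; apply/(diverse_min_stars divP).
Qed.

End MinimumStars.

Lemma u_gt0 n m jj : 3 <= m -> 0 < jj -> 0 < u n m jj.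
Proof. by move=> m_ge3 jj_gt0; rewrite /u; repeat case: ifP => ?; lia. Qed.

Lemma u_eq_block n m jj kk : 3 <= m <= 3 * n -> 0 < jj <= 3 * n -> 0 < kk <= 3 * n ->
  u n m jj = u n m kk -> (jj <= n) = (kk <= n) /\ (jj <= 2 * n) = (kk <= 2 * n).
Proof. by move=> hm hj hk; rewrite /u; repeat case: ifP => ?; lia. Qed.

Lemma set3I (T : finType) (a b c : T) (X : {set T}) :
  a \in X -> b \notin X -> c \notin X -> [set a; b; c] :&: X = [set a].
Proof.
move=> aX bX cX; apply/setP => x; rewrite !inE.
by case: (eqVneq x a) => [-> | _] //=; case: eqP => [-> | _]; case: eqP => [-> | _];
  rewrite ?aX ?(negbTE bX) ?(negbTE cX) ?andbF.
Qed.

Lemma disjoint_neq (T : finType) (X Y : {set T}) x y :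
  [disjoint X & Y] -> x \in X -> y \in Y -> x != y.
Proof. by move=> dXY xX; apply: contraTneq => <-; rewrite (disjointFr dXY xX). Qed.

Section Table.

Variables (T : finType) (D1 D2 D3 : {set T}) (n d m : nat)
  (v : nat -> T) (p : 'I_d -> T * T * T).
Hypotheses (D12 : [disjoint D1 & D2]) (D13 : [disjoint D1 & D3])
  (D23 : [disjoint D2 & D3])
  (card_D1 : #|D1| = n) (card_D2 : #|D2| = n) (card_D3 : #|D3| = n)
  (v_D1 : forall j, 1 <= j <= n -> v j \in D1)
  (v_D2 : forall j, n < j <= 2 * n -> v j \in D2)
  (v_D3 : forall j, 2 * n < j <= 3 * n -> v j \in D3)
  (v_inj : forall j k, 1 <= j <= 3 * n -> 1 <= k <= 3 * n -> v j = v k -> j = k)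
  (p_inj : injective p)
  (p_D : forall i, [/\ (p i).1.1 \in D1, (p i).1.2 \in D2 & (p i).2 \in D3])
  (n_le_d : n <= d) (m_range : 3 <= m <= 3 * n).

Local Notation N := (3 * n).

Definition row_val (r : 'I_N) : T := v r.+1.

Definition row_block (r : 'I_N) : {set T} :=
  if r < n then D1 else if r < 2 * n then D2 else D3.

Definition coords i : {set T} := [set (p i).1.1; (p i).1.2; (p i).2].

Definition coord_rows i : {set 'I_N} := row_val @^-1: coords i.

Lemma tA_coord_rows j i : tA n m v p j i = if j \in coord_rows i then 0 else tB n m j.
Proof. by rewrite /tA inE !inE -orbA. Qed.

Lemma tB_gt0 j : 0 < tB n m j.
Proof. by case/andP: m_range => m_ge3 _; apply: u_gt0. Qed.

Lemma row_val_inj : injective row_val.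
Proof.
move=> j k /v_inj eq_jk; apply/val_inj/succn_inj/eq_jk.
  by have := ltn_ord j; lia.
by have := ltn_ord k; lia.
Qed.

Lemma row_val_block r : row_val r \in row_block r.
Proof.
have := ltn_ord r; rewrite /row_block /row_val => r_lt.
case: ifP => r_n; first by apply: v_D1; lia.
by case: ifP => r_2n; [apply: v_D2 | apply: v_D3]; lia.
Qed.

Lemma row_val_D r : row_val r \in D1 :|: D2 :|: D3.
Proof.
have := row_val_block r; rewrite /row_block !inE.
by case: ifP => _; [|case: ifP => _] => ->; rewrite ?orbT.
Qed.

Lemma D_sub_codom : D1 :|: D2 :|: D3 \subset codom row_val.
Proof.
have codom_D : codom row_val \subset D1 :|: D2 :|: D3.
  by apply/subsetP => x /codomP[r ->]; apply: row_val_D.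
rewrite -(geq_leqif (subset_leqif_card codom_D)).
by rewrite (card_codom row_val_inj) card_ord !cardsU card_D1 card_D2 card_D3; lia.
Qed.

Lemma coords_setI1 i : coords i :&: D1 = [set (p i).1.1].
Proof.
case: (p_D i) => a1 a2 a3.
by rewrite set3I //; apply/negbT; [apply: disjointFl D12 a2 | apply: disjointFl D13 a3].
Qed.

Lemma coords_setI2 i : coords i :&: D2 = [set (p i).1.2].
Proof.
case: (p_D i) => a1 a2 a3; rewrite /coords (setUC [set (p i).1.1]).
by rewrite set3I //; apply/negbT; [apply: disjointFr D12 a1 | apply: disjointFl D23 a3].
Qed.

Lemma coords_setI3 i : coords i :&: D3 = [set (p i).2].
Proof.
case: (p_D i) => a1 a2 a3; rewrite /coords setUC setUA.
by rewrite set3I //; apply/negbT; [apply: disjointFr D13 a1 | apply: disjointFr D23 a2].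
Qed.

Lemma coords_sub_D i : coords i \subset D1 :|: D2 :|: D3.
Proof.
case: (p_D i) => a1 a2 a3.
by apply/subsetP => x; rewrite !inE => /orP[/orP[] | ] /eqP ->; rewrite ?a1 ?a2 ?a3 ?orbT.
Qed.

Lemma coords_sub_codom i : coords i \subset codom row_val.
Proof. exact: subset_trans (coords_sub_D i) D_sub_codom. Qed.

Lemma card_coords i : #|coords i| = 3.
Proof.
case: (p_D i) => a1 a2 a3; rewrite /coords setUC cardsU1 cards2 !inE.
rewrite (disjoint_neq D12 a1 a2) negb_or ![(p i).2 == _]eq_sym.
by rewrite (disjoint_neq D13 a1 a3) (disjoint_neq D23 a2 a3).
Qed.

Lemma card_coord_rows i : #|coord_rows i| = 3.
Proof.
by rewrite card_preimset_codom ?card_coords ?coords_sub_codom //; apply: row_val_inj.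
Qed.

Lemma coord_rows_inj : injective coord_rows.
Proof.
move=> i k /preimset_inj_codom eq_coords.
have {}eq_coords : coords i = coords k by apply: eq_coords; apply: coords_sub_codom.
apply: p_inj; move: (coords_setI1 i) (coords_setI2 i) (coords_setI3 i).
rewrite eq_coords coords_setI1 coords_setI2 coords_setI3.
case: (p i) (p k) => [[? ?] ?] [[? ?] ?] /= /set1_inj-> /set1_inj-> /set1_inj-> //.
Qed.

Lemma disjoint_coords i k : [disjoint coords i & coords k] =
  [&& (p i).1.1 != (p k).1.1, (p i).1.2 != (p k).1.2 & (p i).2 != (p k).2].
Proof.
apply/idP/and3P => [dik | [ne1 ne2 ne3]].
  by split; apply: (disjoint_neq dik); rewrite !inE eqxx ?orbT.
rewrite -setI_eq0; apply/eqP/setP => x; rewrite in_set0.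
apply/negbTE/negP => /setIP[xi xk].
have same_coord X (f : T * T * T -> T) : (forall j, coords j :&: X = [set f (p j)]) ->
    x \in X -> f (p i) = f (p k).
  move=> coordsX xX; have /set1P <- : x \in [set f (p i)] by rewrite -coordsX inE xi.
  by apply/set1P; rewrite -coordsX inE xk.
have /setUP[/setUP[] | ] := subsetP (coords_sub_D i) x xi => xD.
- by move/eqP: ne1; apply; apply: (same_coord D1 (fun t => t.1.1)) coords_setI1 xD.
- by move/eqP: ne2; apply; apply: (same_coord D2 (fun t => t.1.2)) coords_setI2 xD.
- by move/eqP: ne3; apply; apply: (same_coord D3 (fun t => t.2)) coords_setI3 xD.
Qed.

Lemma disjoint_coord_rows i k :
  [disjoint coord_rows i & coord_rows k] = [disjoint coords i & coords k].
Proof.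
rewrite -!setI_eq0 -preimsetI preimset_eq0_codom //.
exact: subset_trans (subsetIl _ _) (coords_sub_codom i).
Qed.

Lemma coords_setI_row_block i r : exists c, coords i :&: row_block r = [set c].
Proof.
rewrite /row_block; case: ifP => _; first by exists (p i).1.1; apply: coords_setI1.
case: ifP => _; first by exists (p i).1.2; apply: coords_setI2.
by exists (p i).2; apply: coords_setI3.
Qed.

Lemma tB_inj_coord_rows i : {in coord_rows i &, injective (tB n m)}.
Proof.
move=> j k ji ki eq_u.
have [eq_n eq_2n] : (j < n) = (k < n) /\ (j < 2 * n) = (k < 2 * n).
  by apply: (u_eq_block m_range) eq_u; rewrite /= ltn_ord.
have eq_block : row_block j = row_block k by rewrite /row_block eq_n eq_2n.
have [c coords_c] := coords_setI_row_block i j.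
have /set1P jc : row_val j \in [set c].
  by rewrite -coords_c in_setI row_val_block andbT; rewrite in_set in ji.
have /set1P kc : row_val k \in [set c].
  by rewrite -coords_c in_setI eq_block row_val_block andbT; rewrite in_set in ki.
by apply: row_val_inj; rewrite jc kc.
Qed.

Lemma coord_rows_eligible i : l_eligible 3 (tB n m) (coord_rows i).
Proof.
by apply: eligible_of_injective; [apply: tB_inj_coord_rows | rewrite card_coord_rows].
Qed.

Lemma has_3DM_coord_rows : has_3DM n p <-> exists I : {set 'I_d}, #|I| = n /\
  forall i k, i \in I -> k \in I -> i != k -> [disjoint coord_rows i & coord_rows k].
Proof.
split=> -[I [card_I matchI]]; exists I; split=> // i k iI kI ik.
  by rewrite disjoint_coord_rows disjoint_coords; apply/and3P; apply: matchI.
by apply/and3P; rewrite -disjoint_coords -disjoint_coord_rows; apply: matchI.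
Qed.

Lemma has_3DM_iff_min_stars : has_3DM n p <->
  exists P, l_diverse_partition 3 (tB n m) P /\ stars (tA n m v p) P = N * (d - 1).
Proof.
have d_gt0 : 0 < d by case/andP: m_range; lia.
apply: iff_trans has_3DM_coord_rows _; apply: iff_sym.
apply: iff_trans (exact_cover_iff coord_rows_inj card_coord_rows isT (card_ord N)).
apply: min_stars_iff_cover tB_gt0 tA_coord_rows coord_rows_inj _ coord_rows_eligible d_gt0.
by move=> i; rewrite card_coord_rows.
Qed.

End Table.

Theorem lemma3 (T : finType) (D1 D2 D3 : {set T}) (n d m : nat)
  (v : nat -> T) (p : 'I_d -> T * T * T) :
  [disjoint D1 & D2] -> [disjoint D1 & D3] -> [disjoint D2 & D3] ->
  #|D1| = n -> #|D2| = n -> #|D3| = n ->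
  (forall j, 1 <= j <= n -> v j \in D1) ->
  (forall j, n < j <= 2 * n -> v j \in D2) ->
  (forall j, 2 * n < j <= 3 * n -> v j \in D3) ->
  (forall j k, 1 <= j <= 3 * n -> 1 <= k <= 3 * n -> v j = v k -> j = k) ->
  injective p ->
  (forall i, [/\ (p i).1.1 \in D1, (p i).1.2 \in D2 & (p i).2 \in D3]) ->
  n <= d ->
  3 <= m <= 3 * n ->
  has_3DM n p <->
  exists P : {set {set 'I_(3 * n)}},
    l_diverse_partition 3 (tB n m) P /\
    stars (tA n m v p) P = 3 * n * (d - 1).
Proof. exact: has_3DM_iff_min_stars. Qed.
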